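(* Let $X$ be a continuous real-valued random variable with compact support, and fix an integer $k \ge 1$. For each $n > k$, let $Z = Z_n$ be the random variable produced by the SMOTE-$k$ procedure (described in the context) from an i.i.d. sample $X_1, \dots, X_n$ drawn from $X$. Then $Z$ converges to $X$ in mean as $n \to \infty$.
   Context: SMOTE-$k$ procedure: given a sample $X_1,\dots,X_n$ of real numbers and a neighbor rank $1 \le k \le n-1$: (1) choose an index $i$ uniformly at random from $\{1,\dots,n\}$; (2) let $X_{i,(k)}$ be the $k$-th nearest neighbor of $X_i$ among the other sample points $\{X_j : j \neq i\}$, i.e. the point realizing the $k$-th smallest of the distances $|X_j - X_i|$, $j \ne i$; (3) draw $\lambda \sim U(0,1)$ independently; (4) output $Z = X_i + \lambda (X_{i,(k)} - X_i)$. The random variable $X$ appearing in the conclusion is taken to be the sample point $X_i$ from which $Z$ is generated (which has the distribution of $X$), so convergence in mean means $E[|Z - X_i|] \to 0$. *)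

From HB Require Import structures.
From mathcomp Require Import all_boot all_order all_algebra.
From mathcomp Require Import all_classical all_reals all_analysis.
Set Implicit Arguments. Unset Strict Implicit. Unset Printing Implicit Defensive.
Import Order.TTheory GRing.Theory Num.Theory.
Import numFieldNormedType.Exports.
Local Open Scope classical_set_scope.
Local Open Scope ring_scope.

Definition measure_support (R : realType) (mu : set R -> \bar R) : set R :=
  [set x | forall e : R, 0 < e -> (0 < mu (ball x e))%E].

(* Sample x_0, ..., x_{n-1} is encoded as the first n values of x : nat -> R. *)
(* Index j of the k-th nearest neighbour of x_i among {x_j : j <> i}:
   indices j <> i sorted (stably, so ties broken by index) by |x_j - x_i|,
   then the k-th one (k >= 1). *)
Definition kth_nn_index (R : realType) (n : nat) (x : 'I_n -> R) (i : 'I_n)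
  (k : nat) : 'I_n :=
  nth i (sort (fun j j' : 'I_n => `|x j - x i| <= `|x j' - x i|)
              [seq j <- enum 'I_n | j != i]) k.-1.

Definition kth_nn (R : realType) (n : nat) (x : 'I_n -> R) (i : 'I_n) (k : nat) : R :=
  x (kth_nn_index x i k).

Definition smote (R : realType) (n : nat) (x : 'I_n -> R) (i : 'I_n) (k : nat)
  (lam : R) : R :=
  x i + lam * (kth_nn x i k - x i).

Definition scons (R : Type) (y : R) (x : nat -> R) : nat -> R :=
  fun j => if j is j'.+1 then x j' else y.

(* Expectation of f(X_0,...,X_{n-1}) for X_0,...,X_{n-1} i.i.d. with law mu,
   i.e. integral against the n-fold product measure mu^{(x)n}, written as an
   iterated integral (f only depends on the first n coordinates). *)
Fixpoint iid_expect (R : realType) (mu : set R -> \bar R) (n : nat)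
  (f : (nat -> R) -> \bar R) : \bar R :=
  match n with
  | 0 => f (fun _ => 0)
  | m.+1 => (\int[mu]_y iid_expect mu m (fun x => f (scons y x)))%E
  end.

(* E |Z_n - X_I| where the sample is i.i.d. mu, I uniform on {0..n-1},
   lam ~ U(0,1) (Lebesgue measure on [0,1]), all independent. *)
Definition smote_mean_error (R : realType) (mu : set R -> \bar R) (k n : nat)
  : \bar R :=
  iid_expect mu n (fun x =>
    ((n%:R)^-1)%:E *
    \sum_(i < n) \int[lebesgue_measure]_(lam in `[0%R, 1%R])
       (`| smote (fun j : 'I_n => x j) i k lam - x i | )%:E)%E.

From HB Require Import structures.
From mathcomp Require Import all_boot all_order all_algebra.
From mathcomp Require Import all_classical all_reals all_analysis.
From mathcomp Require Import zify ring lra.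
Set Implicit Arguments.
Unset Strict Implicit.
Unset Printing Implicit Defensive.
Import Order.TTheory GRing.Theory Num.Theory.
Import numFieldNormedType.Exports.
Local Open Scope classical_set_scope.
Local Open Scope ring_scope.

(* The error is bounded deterministically once the sample lies in an interval
   [a, b] containing the (compact) support.  Cut [a, b] into m + 1 bins of
   width w = (b - a) / (m + 1).  A point whose bin holds more than k sample
   points has its k-th nearest neighbour within w; the other points lie in
   bins holding at most k points, so there are at most k (m + 1) of them, and
   their neighbour is within b - a.  As |Z - X_i| = lam |X_{i,(k)} - X_i|, the
   mean error is at most w + k (m + 1) (b - a) / n: choose m with w small,
   then n large. *)

Lemma sorted_downclosed_nth (T : Type) (leT : rel T) (P : pred T) (x0 : T)
    (s : seq T) (i : nat) :
  transitive leT -> reflexive leT -> sorted leT s ->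
  (forall y z, leT y z -> P z -> P y) ->
  (i < count P s)%N -> P (nth x0 s i).
Proof.
move=> leT_tr leT_refl s_sorted downP ltiP; apply/negPn/negP => notP.
have i_size : (i < size s)%N := leq_trans ltiP (count_size P s).
have noP_drop : ~~ has P (drop i s).
  apply/(has_nthP x0) => -[j]; rewrite size_drop nth_drop => j_size Pj.
  case/negP: notP; apply: (downP _ _ _ Pj).
  by apply: sorted_leq_nth; rewrite ?inE ?leq_addr //; lia.
move: ltiP; rewrite -(cat_take_drop i s) count_cat.
move: noP_drop; rewrite has_count -leqNgt leqn0 => /eqP ->.
by rewrite addn0 ltnNge (leq_trans (count_size _ _)) // size_take_min geq_minl.
Qed.

Lemma kth_nn_dist_le (R : realType) (n : nat) (x : 'I_n -> R) (i : 'I_n)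
    (k : nat) (r : R) :
  (0 < k)%N -> (k <= #|[pred j | (j != i) && (`|x j - x i| <= r)%R]|)%N ->
  `|kth_nn x i k - x i| <= r.
Proof.
move=> k_gt0 k_le; rewrite /kth_nn /kth_nn_index.
set leT := fun j j' : 'I_n => `|x j - x i| <= `|x j' - x i|.
apply: (@sorted_downclosed_nth _ leT (fun j => `|x j - x i| <= r)).
- by move=> ? ? ?; exact: le_trans.
- by move=> ?; exact: lexx.
- by apply: sort_sorted => ? ?; exact: le_total.
- by move=> y z yz zr; exact: le_trans yz zr.
rewrite count_sort count_filter prednK //; apply: leq_trans k_le _.
rewrite cardE size_filter /enum_mem count_filter.
by apply: eq_leq; apply: eq_count => j; rewrite /= andbT andbC.
Qed.

Lemma exists_binning (R : realType) (T : Type) (x : T -> R) (a b : R)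
    (m : nat) :
  a < b -> (forall t, a <= x t <= b) ->
  exists beta : T -> 'I_m.+1,
    forall s t, beta s = beta t -> `|x s - x t| <= (b - a) / m.+1%:R.
Proof.
move=> ab x_ab; set w := (b - a) / m.+1%:R.
have w_gt0 : 0 < w by rewrite divr_gt0 ?ltr0n // subr_gt0.
pose u t := (x t - a) / w.
have xE t : x t = a + w * u t by rewrite /u mulrCA mulfV ?gt_eqF //; ring.
have u_ge0 t : 0 <= u t.
  by rewrite /u divr_ge0 ?(ltW w_gt0) // subr_ge0; case/andP: (x_ab t).
have u_le t : u t <= m.+1%:R.
  rewrite /u ler_pdivrMr // /w mulrCA mulfV ?mulr1 ?gt_eqF ?ltr0n //.
  by case/andP: (x_ab t) => _; lra.
have bin_lt t : (minn (Num.truncn (u t)) m < m.+1)%N by rewrite ltnS geq_minr.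
exists (fun t => Ordinal (bin_lt t)) => s t [bin_st].
have u_bin v :
    (minn (Num.truncn (u v)) m)%:R <= u v <= (minn (Num.truncn (u v)) m)%:R + 1.
  apply/andP; split.
    apply: le_trans (_ : (Num.truncn (u v))%:R <= u v).
      by rewrite ler_nat geq_minl.
    by rewrite truncn_le u_ge0.
  have [_|_] := leqP (Num.truncn (u v)) m.
    by rewrite natr1 ltW // truncnS_gt.
  by rewrite natr1 u_le.
rewrite !xE (_ : _ - _ = w * (u s - u t)); last by ring.
rewrite normrM gtr0_norm // ler_piMr ?(ltW w_gt0) //.
move: (u_bin s) (u_bin t); rewrite bin_st ler_norml => /andP[? ?] /andP[? ?].
by apply/andP; split; lra.
Qed.

Lemma card_small_fibres (I : finType) (m k : nat) (beta : I -> 'I_m) :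
  (#|[pred i | #|[pred j | beta j == beta i]| <= k]| <= k * m)%N.
Proof.
rewrite -sum1_card (partition_big beta xpredT) //= mulnC.
rewrite -[m in (_ <= m * _)%N]card_ord -sum_nat_const; apply: leq_sum => t _.
rewrite sum1_card.
case: (pickP [pred i | (#|[pred j | beta j == beta i]| <= k)%N && (beta i == t)])
  => [i0|none].
  move=> /andP[small_i0 /eqP <-]; apply: leq_trans small_i0.
  by apply: subset_leq_card; apply/fintype.subsetP => j /andP[].
by rewrite (eq_card0 none).
Qed.

Lemma sum_kth_nn_dist_le (R : realType) (n : nat) (x : 'I_n -> R) (k : nat)
    (a b : R) (m : nat) :
  (0 < k)%N -> a < b -> (forall j, a <= x j <= b) ->
  \sum_(i < n) `|kth_nn x i k - x i| <=
    n%:R * ((b - a) / m.+1%:R) + (k * m.+1)%:R * (b - a).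
Proof.
move=> k_gt0 ab x_ab; set w := (b - a) / m.+1%:R.
have w_ge0 : 0 <= w by rewrite divr_ge0 ?ler0n // subr_ge0 ltW.
have [beta close] := exists_binning m ab x_ab.
pose small i := (#|[pred j | beta j == beta i]| <= k)%N.
have dist_le i : `|kth_nn x i k - x i| <= w + (if small i then b - a else 0).
  case: ifPn => [_ | ]; last rewrite /small -ltnNge => big_fibre.
    move: (x_ab i) (x_ab (kth_nn_index x i k)); rewrite /kth_nn.
    by rewrite ler_norml => /andP[? ?] /andP[? ?]; apply/andP; split; lra.
  rewrite addr0; apply: kth_nn_dist_le => //.
  move: big_fibre; rewrite (cardD1 i) inE eqxx add1n ltnS => /leq_trans; apply.
  apply: subset_leq_card; apply/fintype.subsetP => j /andP[ji /eqP bj].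
  by rewrite inE ji close.
apply: le_trans (ler_sum _ (fun i _ => dist_le i)) _.
rewrite big_split /= sumr_const card_ord -[w *+ n]mulr_natl lerD2l.
rewrite -big_mkcond /= sumr_const -[(b - a) *+ _]mulr_natl.
rewrite ler_wpM2r ?subr_ge0 ?(ltW ab) // ler_nat.
exact: card_small_fibres.
Qed.

Lemma compact_subset_itvcc (R : realType) (S : set R) :
  compact S -> exists a b : R, a < b /\ S `<=` `[a, b].
Proof.
move=> /compact_bounded [M [_ M_bound]].
exists (- (`|M| + 1)), (`|M| + 1); split; first by have := normr_ge0 M; lra.
have M_lt : M < `|M| + 1 by have := ler_norm M; lra.
by move=> x /(M_bound _ M_lt); rewrite /= in_itv /= -ler_norml.
Qed.

Lemma negligible_compl_measure_support (R : realType)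
    (mu : {measure set R -> \bar R}) :
  mu.-negligible (~` measure_support mu).
Proof.
pose null_ball (qr : rat * rat) : set R :=
  let U := ball (ratr qr.1 : R) (ratr qr.2) in if mu U == 0%E then U else set0.
pose B (p : nat) := if unpickle p is Some qr then null_ball qr else set0.
apply: (@negligibleS _ _ _ _ (\bigcup_p B p)); last first.
  apply: negligible_bigcup => p; rewrite /B /null_ball.
  case: (unpickle p) => [qr|]; last exact: negligible_set0.
  case: ifPn => [/eqP null|_]; last exact: negligible_set0.
  exists (ball (ratr qr.1 : R) (ratr qr.2)); split => //.
  exact: measurable_realfun.measurable_ball.
move=> x /= x_notin.
have [e [e_gt0 null_e]] : exists e : R, 0 < e /\ mu (ball x e) = 0%E.
  apply: contrapT => no_null; apply: x_notin => e e_gt0.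
  rewrite lt0e measure_ge0 andbT; apply/eqP => null.
  by apply: no_null; exists e.
have e_split : e / 4 + e / 2 < e by lra.
have [q] := @rat_in_itvoo R (x - e / 4) (x + e / 4) ltac:(lra).
have [r] := @rat_in_itvoo R (e / 4) (e / 2) ltac:(lra).
rewrite !in_itv /= => /andP[r1 r2] /andP[q1 q2].
have r_lt : e / 4 + ratr r < e by rewrite (lt_trans _ e_split) // ltrD2l.
have xq : `|x - ratr q| < e / 4 by rewrite ltr_distlC; apply/andP.
have sub_e : ball (ratr q : R) (ratr r) `<=` ball x e.
  move=> y; rewrite -!ball_normE /= => qy.
  by rewrite (le_lt_trans (ler_distD (ratr q) x y)) // (lt_trans (ltrD xq qy)).
have null_qr : mu (ball (ratr q : R) (ratr r)) = 0%E.
  apply/eqP; rewrite eq_le measure_ge0 andbT -null_e.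
  apply: le_measure; rewrite ?inE //; exact: measurable_realfun.measurable_ball.
exists (pickle (q, r)); first by [].
rewrite /B pickleK /null_ball [in X in if X then _ else _]/= null_qr eqxx.
by rewrite -ball_normE /= distrC (lt_trans xq).
Qed.

Local Open Scope ereal_scope.

(* No measurability is required: for a nonnegative integrand the integral is
   the supremum of the integrals of the simple functions below it. *)
Lemma ge0_le_integral_nomeas d (T : measurableType d) (R : realType)
    (mu : {measure set T -> \bar R}) (D : set T) (f g : T -> \bar R) :
  (forall x, D x -> 0 <= f x) -> (forall x, D x -> f x <= g x) ->
  \int[mu]_(x in D) f x <= \int[mu]_(x in D) g x.
Proof.
move=> f_ge0 fg.
have g_ge0 x : D x -> 0 <= g x.
  by move=> Dx; exact: le_trans (f_ge0 _ Dx) (fg _ Dx).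
rewrite !ge0_integralE //; apply: ereal_sup_le => _ [h /= hf <-].
exists h => //= x; apply: le_trans (hf x) _; rewrite /patch.
by case: ifPn => // /set_mem /fg.
Qed.

Lemma integral01_interpolation_dist_le (R : realType) (p q : R) :
  \int[lebesgue_measure]_(lam in `[0%R, 1%R]) (`|p + lam * (q - p) - p|)%:E
  <= (`|q - p|)%:E.
Proof.
apply: le_trans (@ge0_le_integral_nomeas _ _ _ _ _ _ (cst (`|q - p|)%:E) _ _) _.
- by move=> ? _; rewrite lee_fin normr_ge0.
- move=> lam; rewrite /= in_itv /= => /andP[lam_ge0 lam_le1].
  rewrite lee_fin addrAC subrr add0r normrM ger0_norm //.
  by rewrite ler_piMl ?normr_ge0.
rewrite integral_cst //= lebesgue_measure_itv /= lte_fin ltr01.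
by rewrite -EFinB subr0 mule1.
Qed.

Section iid_expect.
Variables (R : realType) (mu : probability R R).

Lemma iid_expect_ge0 (n : nat) (f : (nat -> R) -> \bar R) :
  (forall x, 0 <= f x) -> 0 <= iid_expect mu n f.
Proof.
elim: n f => [|n IH] f f_ge0 /=; first exact: f_ge0.
by apply: integral_ge0 => y _; apply: IH.
Qed.

Lemma iid_expect_le (S : set R) (n : nat) (f : (nat -> R) -> \bar R) (c : R) :
  mu.-negligible (~` S) -> (forall x, 0 <= f x) ->
  (forall x, (forall j, (j < n)%N -> S (x j)) -> f x <= c%:E) ->
  iid_expect mu n f <= c%:E.
Proof.
move=> [N [mN muN0 SN]]; elim: n f => [|n IH] f f_ge0 f_le /=.
  by apply: f_le => j.
(* The integrand in y need not be measurable; bound it by the measurable [g],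
   which is [+oo] on the null set [N]. *)
pose g y := if y \in N then +oo else c%:E.
apply: (@le_trans _ _ (\int[mu]_y g y)).
  apply: ge0_le_integral_nomeas => y _; first exact: iid_expect_ge0.
  rewrite /g; case: ifPn => [_|yN]; first exact: leey.
  apply: IH => [x|x xS]; first exact: f_ge0.
  apply: f_le => -[_|j] /=; last exact: xS.
  by apply: contrapT => /SN /mem_set yN'; rewrite yN' in yN.
rewrite (ae_eq_integral (cst c%:E)) //.
- rewrite (integral_cst mu measurableT).
  have mu_setT : mu setT = 1 by exact: probability_setT.
  by move: mu_setT => /= ->; rewrite mule1.
- rewrite /g; apply: measurable_fun_if => //; apply: (measurable_fun_bool true).
  by rewrite setTI preimage_mem_true.
- exists N; split => // y /= g_neq; apply: contrapT => yN.
  by apply: g_neq => _; rewrite /g ifF //; apply/negP; rewrite in_setE.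
Qed.

End iid_expect.

Lemma cvge0_ge0_near_le (R : realType) (u : nat -> \bar R) :
  (forall n, 0 <= u n) ->
  (forall e : R, (0 < e)%R -> \forall n \near \oo, u n <= e%:E) ->
  u n @[n --> \oo] --> 0.
Proof.
move=> u_ge0 u_small; apply/fine_cvgP; split.
  apply: filterS (u_small 1%R ltr01) => n u_le1.
  by rewrite ge0_fin_numE // (le_lt_trans u_le1) ?ltry.
apply/cvgrPdist_le => e e_gt0; apply: filterS (u_small e e_gt0) => n u_le.
rewrite /= sub0r normrN ger0_norm ?fine_ge0 //.
by rewrite -lee_fin fineK // ge0_fin_numE // (le_lt_trans u_le) ?ltry.
Qed.

Definition smote_sample_error (R : realType) (k n : nat) (x : nat -> R)
  : \bar R :=
  ((n%:R)^-1)%:E *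
  \sum_(i < n) \int[lebesgue_measure]_(lam in `[0%R, 1%R])
     (`| smote (fun j : 'I_n => x j) i k lam - x i | )%:E.

Lemma smote_sample_error_ge0 (R : realType) (k n : nat) (x : nat -> R) :
  0 <= smote_sample_error k n x.
Proof.
apply: mule_ge0; first by rewrite lee_fin invr_ge0 ler0n.
apply: sume_ge0 => i _; apply: integral_ge0 => lam _.
by rewrite lee_fin normr_ge0.
Qed.

Lemma smote_sample_error_le (R : realType) (k n m : nat) (a b : R)
    (x : nat -> R) :
  (0 < k)%N -> (0 < n)%N -> (a < b)%R ->
  (forall j, (j < n)%N -> (a <= x j <= b)%R) ->
  smote_sample_error k n x <=
    ((b - a) / m.+1%:R + (k * m.+1)%:R * (b - a) / n%:R)%:E.
Proof.
move=> k_gt0 n_gt0 ab x_ab.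
have n_neq0 : (n%:R != 0 :> R)%R by rewrite pnatr_eq0 -lt0n.
rewrite /smote_sample_error.
pose nn_dist i := `|kth_nn (fun j : 'I_n => x j) i k - x i|%R.
apply: (@le_trans _ _ (((n%:R)^-1)%:E * (\sum_(i < n) nn_dist i)%R%:E)).
  apply: lee_wpmul2l; first by rewrite lee_fin invr_ge0 ler0n.
  rewrite -sumEFin; apply: lee_sum => i _.
  exact: integral01_interpolation_dist_le.
rewrite -EFinM lee_fin.
apply: le_trans (ler_wpM2l _ (sum_kth_nn_dist_le m k_gt0 ab _)) _.
- by rewrite invr_ge0 ler0n.
- by move=> j; exact: x_ab.
rewrite [leLHS](_ : _ = (b - a) / m.+1%:R + (k * m.+1)%:R * (b - a) / n%:R)%R//.
by field; rewrite n_neq0 nat1r pnatr_eq0.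
Qed.

Lemma nbhs_infty_divn_le (R : realType) (C e : R) :
  (0 < e)%R -> \forall n \near \oo, (C / n%:R <= e)%R.
Proof.
move=> e_gt0; near=> n.
have n_gt0 : (0 < n%:R :> R)%R by rewrite ltr0n; near: n; exact: nbhs_infty_gt.
rewrite ler_pdivrMr // -ler_pdivrMl //.
near: n; exact: nbhs_infty_ger.
Unshelve. all: end_near. Qed.

Section smote_mean_error.
Variables (R : realType) (mu : probability R R) (k : nat).

Lemma smote_mean_error_ge0 (n : nat) : 0 <= smote_mean_error mu k n.
Proof. by apply: iid_expect_ge0 => x; exact: smote_sample_error_ge0. Qed.

Lemma smote_mean_error_le (a b : R) (n m : nat) :
  (0 < k)%N -> (0 < n)%N -> (a < b)%R -> measure_support mu `<=` `[a, b] ->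
  smote_mean_error mu k n <=
    ((b - a) / m.+1%:R + (k * m.+1)%:R * (b - a) / n%:R)%:E.
Proof.
move=> k_gt0 n_gt0 ab supp_ab.
apply: (iid_expect_le (negligible_compl_measure_support mu)).
  exact: smote_sample_error_ge0.
move=> x x_supp; apply: smote_sample_error_le => // j j_lt.
by have := supp_ab _ (x_supp j j_lt); rewrite /= in_itv.
Qed.

End smote_mean_error.

Theorem theorem3 (R : realType) (mu : probability R R) (k : nat) :
  (0 < k)%N ->
  (forall a : R, mu [set a] = 0%E) ->
  compact (measure_support mu) ->
  smote_mean_error mu k n @[n --> \oo] --> 0%E.
Proof.
move=> k_gt0 _ supp_compact.
have [a [b [ab supp_ab]]] := compact_subset_itvcc supp_compact.
apply: cvge0_ge0_near_le => [n|e e_gt0]; first exact: smote_mean_error_ge0.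
pose m := Num.truncn (2 * (b - a) / e)%R.
have bin_small : ((b - a) / m.+1%:R <= e / 2)%R.
  have := truncnS_gt (2 * (b - a) / e)%R; rewrite -/m ltr_pdivrMr //.
  by rewrite ler_pdivrMr ?ltr0n //; nra.
near=> n.
have n_gt0 : (0 < n)%N by near: n; exact: nbhs_infty_gt.
apply: le_trans (smote_mean_error_le m k_gt0 n_gt0 ab supp_ab) _.
rewrite lee_fin [leRHS](splitr e) lerD //.
near: n; apply: nbhs_infty_divn_le; exact: divr_gt0.
Unshelve. all: end_near. Qed.
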